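(* For every formula $q\in F(V)$: $\vDash_{\mathbb{SQW^*}}q$ if and only if $\vdash_{\mathrm{sq}\L^*}q$.
   Context: Let $V$ be a set of propositional variables and $F(V)$ the set of formulas built from $V$ and the constant $1$ using $\to$ and $\neg$. Abbreviations: $p^+:=(p\to 1)\to 1$, $p^-:=(p\to\neg 1)\to\neg 1$ (binding more tightly than $\neg$), $p\vee q:=((p^+\to q^+)^+\to(\neg p)^-)\to((q^-\to p^-)^-\to p^-)$; an axiom ''$p\leftrightarrow q$'' stands for the two axioms $p\to q$ and $q\to p$. The logic $\mathrm{sq}\L^*$ has axiom schemas (for all $p,q,r\in F(V)$): (Q1) $(p\to q)\leftrightarrow(\neg q\to\neg p)$; (Q2) $1\leftrightarrow((1\to p)\to 1)$; (Q3) $p\leftrightarrow((q\to q)\to p)$; (Q4) $(p\to q)\leftrightarrow((q^+\to p^-)\to(p^+\to q^-))$; (Q5) $\neg(p\to q)\leftrightarrow(q\to p)$; (Q6) $(p\to(\neg p\to q))^+\leftrightarrow(p^+\to(\neg p^+\to q^+))$; (Q7) $(p\to(q\vee r))\leftrightarrow((p\to r)\vee(p\to q))$; (Q8) $(p\vee(q\vee r))\leftrightarrow((p\vee q)\vee r)$; (Q9) $((p\to 1)\to((q\to 1)\to r))\to((q\to 1)\to((p\to 1)\to r))$; (Q10) $p\to 1$; and rules: (qMP) from $(r\to r)\to p$ and $(r\to r)\to(p\to q)$ infer $(r\to r)\to q$; (Reg) from $p$ infer $(r\to r)\to p$; (AReg1) from $(r\to r)\to(p\to q)$ infer $p\to q$;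 (AReg2) from $(r\to r)\to\neg(p\to q)$ infer $\neg(p\to q)$; (AReg3) from $(r\to r)\to\neg 1$ infer $\neg 1$; (AReg4) from $(r\to r)\to 1$ infer $1$; (Inv1) from $p$ infer $\neg\neg p$; (Inv2) from $\neg\neg p$ infer $p$; (Flat) from $p$ and $\neg 1$ infer $\neg p$; (R2$'$) from $p\to q$ and $r\to t$ infer $(q\to r)\to(p\to t)$; (R3$'$) from $(r\to r)\to p$ infer $p^-$. $\vdash_{\mathrm{sq}\L^*}q$ means there is a finite sequence ending with $q$ whose members are axiom instances or follow from earlier members by rules. Semantics: a quasi-Wajsberg* algebra is an algebra $\langle W;\to,\neg,{}^+,{}^-,1\rangle$ of type $\langle 2,1,1,1,0\rangle$ such that for all $x,y,z$: $x\to y=\neg y\to\neg x$; $(x\to 1)\to((y\to 1)\to z)=(y\to 1)\to((x\to 1)\to z)$; $(1\to x)\to 1=1$; $(z\to z)\to(x\to y)=x\to y$; $(1\to 1)\to x^{+}=((1\to 1)\to x)^{+}=(x\to 1)\to 1$ and $(1\to 1)\to x^{-}=((1\to 1)\to x)^{-}=(x\to\neg 1)\to\neg 1$; $x\to y=(y^{+}\to x^{-})\to(x^{+}\to y^{-})$; $\neg(x\to y)=y\to x$; $\neg\neg x=x$; $(x\to(\neg x\to y))^{+}=x^{+}\to(\neg x^{+}\to y^{+})$; $x\vee y=y\vee x$; $x\vee(y\vee z)=(x\vee y)\vee z$; $x\to(y\vee z)=(x\to y)\vee(x\to z)$, with $x\vee y:=((x^{+}\to y^{+})^{+}\to(\neg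 x)^{-})\to((y^{-}\to x^{-})^{-}\to x^{-})$. A strong quasi-Wajsberg* algebra additionally satisfies $x^+=(1\to 1)\to x^+$ and $x^-=(1\to 1)\to x^-$; $\mathbb{SQW^*}$ is the class of these. An element $d$ of such an algebra $\mathbf{A}$ is designated if $d=(c\to 1)\to 1$ for some $c\in A$. $\vDash_{\mathbb{SQW^*}}q$ means: for every $\mathbf{A}\in\mathbb{SQW^*}$ and every assignment of the variables in $A$, the value of $q$ (computing $\to,\neg,1$ in $\mathbf{A}$) is designated. *)

Set Implicit Arguments.

Inductive form (V : Type) : Type :=
| Var : V -> form V
| One : form V
| Imp : form V -> form V -> form V
| Neg : form V -> form V.
Arguments One {V}.

Section Abbrev.
Variable V : Type.
Definition fplus (p : form V) : form V := Imp (Imp p One) One.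
Definition fminus (p : form V) : form V := Imp (Imp p (Neg One)) (Neg One).
Definition fvee (p q : form V) : form V :=
  Imp (Imp (fplus (Imp (fplus p) (fplus q))) (fminus (Neg p)))
      (Imp (fminus (Imp (fminus q) (fminus p))) (fminus p)).
End Abbrev.

(** Pairs (lhs, rhs) of the biconditional axiom schemas (Q1)-(Q8);
    "p <-> q" stands for the two axioms p -> q and q -> p. *)
Inductive axiom_iff (V : Type) : form V -> form V -> Prop :=
| Q1 p q : axiom_iff (Imp p q) (Imp (Neg q) (Neg p))
| Q2 p : axiom_iff One (Imp (Imp One p) One)
| Q3 p q : axiom_iff p (Imp (Imp q q) p)
| Q4 p q : axiom_iff (Imp p q)
                     (Imp (Imp (fplus q) (fminus p)) (Imp (fplus p) (fminus q)))
| Q5 p q : axiom_iff (Neg (Imp p q)) (Imp q p)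
| Q6 p q : axiom_iff (fplus (Imp p (Imp (Neg p) q)))
                     (Imp (fplus p) (Imp (Neg (fplus p)) (fplus q)))
| Q7 p q r : axiom_iff (Imp p (fvee q r)) (fvee (Imp p r) (Imp p q))
| Q8 p q r : axiom_iff (fvee p (fvee q r)) (fvee (fvee p q) r).

Inductive provable (V : Type) : form V -> Prop :=
| ax_iff_l p q : axiom_iff p q -> provable (Imp p q)
| ax_iff_r p q : axiom_iff p q -> provable (Imp q p)
| Q9 p q r : provable
    (Imp (Imp (Imp p One) (Imp (Imp q One) r))
         (Imp (Imp q One) (Imp (Imp p One) r)))
| Q10 p : provable (Imp p One)
| qMP r p q : provable (Imp (Imp r r) p) -> provable (Imp (Imp r r) (Imp p q)) ->
              provable (Imp (Imp r r) q)
| Reg r p : provable p -> provable (Imp (Imp r r) p)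
| AReg1 r p q : provable (Imp (Imp r r) (Imp p q)) -> provable (Imp p q)
| AReg2 r p q : provable (Imp (Imp r r) (Neg (Imp p q))) -> provable (Neg (Imp p q))
| AReg3 r : provable (Imp (Imp r r) (Neg One)) -> provable (Neg One)
| AReg4 r : provable (Imp (Imp r r) One) -> provable One
| Inv1 p : provable p -> provable (Neg (Neg p))
| Inv2 p : provable (Neg (Neg p)) -> provable p
| Flat p : provable p -> provable (Neg One) -> provable (Neg p)
| R2' p q r t : provable (Imp p q) -> provable (Imp r t) ->
                provable (Imp (Imp q r) (Imp p t))
| R3' r p : provable (Imp (Imp r r) p) -> provable (fminus p).

Record SQWalg : Type := {
  carrier :> Type;
  aimp : carrier -> carrier -> carrier;
  aneg : carrier -> carrier;
  aplus : carrier -> carrier;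
  aminus : carrier -> carrier;
  aone : carrier;
  avee : carrier -> carrier -> carrier :=
    fun x y => aimp (aimp (aplus (aimp (aplus x) (aplus y))) (aminus (aneg x)))
                    (aimp (aminus (aimp (aminus y) (aminus x))) (aminus x));
  ax1 : forall x y, aimp x y = aimp (aneg y) (aneg x);
  ax2 : forall x y z, aimp (aimp x aone) (aimp (aimp y aone) z)
                      = aimp (aimp y aone) (aimp (aimp x aone) z);
  ax3 : forall x, aimp (aimp aone x) aone = aone;
  ax4 : forall x y z, aimp (aimp z z) (aimp x y) = aimp x y;
  ax5a : forall x, aimp (aimp aone aone) (aplus x) = aplus (aimp (aimp aone aone) x);
  ax5b : forall x, aplus (aimp (aimp aone aone) x) = aimp (aimp x aone) aone;
  ax6a : forall x, aimp (aimp aone aone) (aminus x) = aminus (aimp (aimp aone aone) x);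
  ax6b : forall x, aminus (aimp (aimp aone aone) x) = aimp (aimp x (aneg aone)) (aneg aone);
  ax7 : forall x y, aimp x y = aimp (aimp (aplus y) (aminus x)) (aimp (aplus x) (aminus y));
  ax8 : forall x y, aneg (aimp x y) = aimp y x;
  ax9 : forall x, aneg (aneg x) = x;
  ax10 : forall x y, aplus (aimp x (aimp (aneg x) y))
                     = aimp (aplus x) (aimp (aneg (aplus x)) (aplus y));
  ax11 : forall x y, avee x y = avee y x;
  ax12 : forall x y z, avee x (avee y z) = avee (avee x y) z;
  ax13 : forall x y z, aimp x (avee y z) = avee (aimp x y) (aimp x z);
  axS1 : forall x, aplus x = aimp (aimp aone aone) (aplus x);
  axS2 : forall x, aminus x = aimp (aimp aone aone) (aminus x)
}.

Definition designated (A : SQWalg) (d : A) : Prop :=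
  exists c : A, d = aimp A (aimp A c (aone A)) (aone A).

Fixpoint eval (V : Type) (A : SQWalg) (v : V -> A) (q : form V) : A :=
  match q with
  | Var x => v x
  | One => aone A
  | Imp p r => aimp A (eval A v p) (eval A v r)
  | Neg p => aneg A (eval A v p)
  end.

Definition sqw_valid (V : Type) (q : form V) : Prop :=
  forall (A : SQWalg) (v : V -> A), designated A (eval A v q).

From Stdlib Require Import FunctionalExtensionality PropExtensionality ProofIrrelevance ClassicalEpsilon.
Set Implicit Arguments.
Unset Strict Implicit.

(** Designated elements are exactly the fixed points of [x ↦ x⁺], and
    [x → y = 1 → 1] identifies [x] and [y] up to their regular parts
    [(1 → 1) → x].  Every axiom pair of sqŁ* evaluates to such an equivalence
    and every rule preserves designation, which gives soundness.
    For completeness, formulas modulo interderivability form a strong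
    quasi-Wajsberg* algebra.  If [q] is valid, its class there is some [c⁺],
    so [(1 → 1) → q] is provable by Q10 and qMP.  The rules AReg1-AReg4 strip
    the prefix [1 → 1] according to the outermost connective of [q], Inv1
    handles double negations, and a three-element algebra shows that neither a
    variable nor its negation is valid. *)

(** * Identities in strong quasi-Wajsberg* algebras *)

Section Algebra.
Variable A : SQWalg.
Local Notation "x --> y" := (aimp A x y) (at level 55, right associativity).
Local Notation "¬ x" := (aneg A x) (at level 35, right associativity).
Local Notation "x ⁺" := (aplus A x) (at level 1, format "x ⁺").
Local Notation "x ⁻" := (aminus A x) (at level 1, format "x ⁻").
Local Notation "x ⊔ y" := (avee A x y) (at level 50, left associativity).
Local Notation "x ⊓ y" := (¬ (¬ x ⊔ ¬ y)) (at level 45, left associativity).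
Local Notation one := (aone A).
Local Notation e := (one --> one).

Lemma aplusE x : x⁺ = (x --> one) --> one.
Proof. now rewrite (axS1 A x), (ax5a A x), (ax5b A x). Qed.

Lemma aminusE x : x⁻ = (x --> ¬ one) --> ¬ one.
Proof. now rewrite (axS2 A x), (ax6a A x), (ax6b A x). Qed.

Lemma aimp_flip x y : x --> y = ¬ (y --> x).
Proof. now rewrite (ax8 A y x). Qed.

Lemma aneg_e : ¬ e = e.
Proof. apply ax8. Qed.

Lemma aimp_diag z : z --> z = e.
Proof.
  pose proof (ax8 A (z --> z) e) as H.
  rewrite (ax4 A one one z), (ax4 A z z one), aneg_e in H.
  congruence.
Qed.

Lemma one_imp_e : one --> e = ¬ one.
Proof. now rewrite aimp_flip, (ax3 A one). Qed.

Lemma negone_imp_one : ¬ one --> one = one.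
Proof. rewrite <- one_imp_e. apply ax3. Qed.

Lemma e_imp_negone : e --> ¬ one = ¬ one.
Proof. now rewrite (ax1 A e), (ax9 A), aneg_e, one_imp_e. Qed.

Lemma aminusE_contra x : x⁻ = one --> (¬ one --> x).
Proof. now rewrite aminusE, (ax1 A (x --> ¬ one)), (ax8 A x), (ax9 A). Qed.

Lemma aplusE_contra x : x⁺ = ¬ one --> (one --> x).
Proof. now rewrite aplusE, (ax1 A (x --> one)), (ax8 A x). Qed.

Lemma aneg_aplus x : ¬ x⁺ = (¬ x)⁻.
Proof.
  now rewrite aplusE, (ax8 A (x --> one)), aminusE_contra, (ax1 A (¬ one) (¬ x)), !(ax9 A).
Qed.

Lemma aneg_aminus x : ¬ x⁻ = (¬ x)⁺.
Proof. now rewrite <- (ax9 A x) at 1; rewrite <- aneg_aplus, (ax9 A). Qed.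

Lemma aminus_aplus_dual x : x⁻ = ¬ (¬ x)⁺.
Proof. now rewrite <- aneg_aminus, (ax9 A). Qed.

Lemma aplus_imp_one x : x⁺ --> one = x --> one.
Proof.
  pose proof (f_equal (aneg A) (ax2 A x (¬ one) one)) as H.
  now rewrite negone_imp_one, <- aplusE, (ax8 A (x --> one)), (ax8 A one), (ax4 A) in H.
Qed.

Lemma aplus_idem x : x⁺⁺ = x⁺.
Proof. now rewrite (aplusE x⁺), aplus_imp_one, <- aplusE. Qed.

Lemma aminus_aplus x : x⁺⁻ = e.
Proof.
  rewrite aminusE_contra, (ax1 A (¬ one) x⁺), (ax9 A), (aplusE x) at 1.
  now rewrite (ax8 A (x --> one)), (ax3 A).
Qed.

Lemma aplus_aminus x : x⁻⁺ = e.
Proof.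
  now rewrite <- (ax9 A x⁻⁺), aneg_aplus, (aneg_aminus x), aminus_aplus, aneg_e.
Qed.

Lemma aminus_idem x : x⁻⁻ = x⁻.
Proof.
  now rewrite (aminus_aplus_dual x⁻), aneg_aminus, aplus_idem, <- aminus_aplus_dual.
Qed.

Lemma aplus_e : e⁺ = e.
Proof. now rewrite aplusE, (ax3 A one). Qed.

Lemma aminus_e : e⁻ = e.
Proof. now rewrite aminusE_contra, (aimp_flip (¬ one) e), e_imp_negone, (ax9 A). Qed.

Lemma e_imp_aplus x : e --> x⁺ = x⁺.
Proof. symmetry; apply axS1. Qed.

Lemma e_imp_aminus x : e --> x⁻ = x⁻.
Proof. symmetry; apply axS2. Qed.

Lemma aplus_reg x : (e --> x)⁺ = x⁺.
Proof. now rewrite (ax5b A), aplusE. Qed.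

Lemma aminus_reg x : (e --> x)⁻ = x⁻.
Proof. now rewrite (ax6b A), aminusE. Qed.

Lemma aimp_reg_l x y : (e --> x) --> y = x --> y.
Proof. now rewrite (ax7 A (e --> x) y), aplus_reg, aminus_reg, <- (ax7 A). Qed.

Lemma aimp_reg_r x y : y --> (e --> x) = y --> x.
Proof. now rewrite (ax7 A y (e --> x)), aplus_reg, aminus_reg, <- (ax7 A). Qed.

Lemma aplus_imp_e x : x⁺ --> e = ¬ x⁺.
Proof. now rewrite (ax1 A x⁺ e), aneg_e, aneg_aplus, e_imp_aminus. Qed.

Lemma reg_decomp x : e --> x = ¬ x⁺ --> x⁻.
Proof. now rewrite (ax7 A e x), aminus_e, aplus_e, aplus_imp_e, e_imp_aminus. Qed.

Lemma aveeE x y : x ⊔ y = ((x⁺ --> y⁺)⁺ --> (¬ x)⁻) --> ((y⁻ --> x⁻)⁻ --> x⁻).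
Proof. reflexivity. Qed.

Lemma avee_e x : x ⊔ e = x⁺.
Proof.
  rewrite aveeE, aplus_e, aplus_imp_e, aneg_aplus, aplus_aminus, e_imp_aminus, aminus_e,
    e_imp_aminus, aminus_idem, aimp_diag.
  now rewrite (ax1 A (¬ x)⁻ e), aneg_e, aneg_aminus, (ax9 A), e_imp_aplus.
Qed.

Lemma e_avee x : e ⊔ x = x⁺.
Proof. rewrite (ax11 A). apply avee_e. Qed.

Lemma e_imp_avee x y : e --> x ⊔ y = x ⊔ y.
Proof. rewrite aveeE. apply ax4. Qed.

Lemma avee_imp x y z : x ⊔ y --> z = (x --> z) ⊓ (y --> z).
Proof. now rewrite aimp_flip, (ax13 A), (aimp_flip z x), (aimp_flip z y). Qed.

Lemma ameet_imp x y z : x ⊓ y --> z = (x --> z) ⊔ (y --> z).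
Proof. now rewrite (ax1 A _ z), (ax9 A), (ax13 A), <- !(ax1 A). Qed.

Lemma imp_ameet x y z : x --> y ⊓ z = (x --> y) ⊓ (x --> z).
Proof. now rewrite (ax1 A x), (ax9 A), avee_imp, <- !(ax1 A). Qed.

Lemma ameetC x y : x ⊓ y = y ⊓ x.
Proof. now rewrite (ax11 A). Qed.

Lemma ameetA x y z : x ⊓ (y ⊓ z) = x ⊓ y ⊓ z.
Proof. now rewrite !(ax9 A), (ax12 A). Qed.

Lemma ameet_e x : x ⊓ e = x⁻.
Proof. now rewrite aneg_e, avee_e, <- aminus_aplus_dual. Qed.

Lemma aplus_ameet x y : (x ⊓ y)⁺ = x⁺ ⊓ y⁺.
Proof. now rewrite !aplusE_contra, !imp_ameet. Qed.

Lemma aimp_e_sym x y : x --> y = e -> y --> x = e.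
Proof. intros H. now rewrite aimp_flip, H, aneg_e. Qed.

Lemma eq_e_of_aplus_aminus z : z⁺ = z -> z⁻ = z -> z = e.
Proof. intros Hp Hm. now rewrite <- Hp, <- Hm, aplus_aminus. Qed.

Lemma aimp_aplus_of_e x y : x --> y = e -> x --> y⁺ = (¬ x)⁺.
Proof.
  intros H. rewrite <- (avee_e y), (ax13 A), H, e_avee, (ax1 A x e), aneg_e.
  apply aplus_reg.
Qed.

Lemma aplus_imp_aplus_of_e x y : x --> y = e -> x⁺ --> y⁺ = (¬ x)⁺ ⊓ y⁺.
Proof.
  intros H. rewrite <- (avee_e x) at 1.
  now rewrite avee_imp, (aimp_aplus_of_e H), e_imp_aplus.
Qed.

Lemma aplus_aimp_e x y : x --> y = e -> x⁺ --> y⁺ = e.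
Proof.
  intros H. pose proof (aimp_e_sym H) as H'.
  apply eq_e_of_aplus_aminus.
  - now rewrite (aplus_imp_aplus_of_e H), aplus_ameet, !aplus_idem.
  - rewrite aimp_flip, (aplus_imp_aplus_of_e H'), aminus_aplus_dual, (ax9 A).
    now rewrite aplus_ameet, !aplus_idem, ameetC.
Qed.

Lemma avee_of_aimp_e x y : x --> y = e -> x ⊔ y = e --> x.
Proof.
  intros H.
  assert (Hp : (x⁺ --> y⁺)⁺ = e) by now rewrite (aplus_aimp_e H), aplus_e.
  assert (Hm : (y⁻ --> x⁻)⁻ = e).
  { assert (H' : ¬ y --> ¬ x = e) by now rewrite <- (ax1 A).
    apply aplus_aimp_e in H'.
    rewrite <- !aneg_aminus, <- (ax1 A) in H'.
    now rewrite aimp_flip, H', aneg_e, aminus_e. }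
  now rewrite aveeE, Hp, Hm, !e_imp_aminus, reg_decomp, aneg_aplus.
Qed.

Lemma reg_eq_of_aimp_e x y : x --> y = e -> e --> x = e --> y.
Proof.
  intros H.
  rewrite <- (avee_of_aimp_e H), <- (avee_of_aimp_e (aimp_e_sym H)).
  apply ax11.
Qed.

Lemma reg_eq_avee_of_aminus x y : (x --> y)⁻ = e -> e --> y = x ⊔ y.
Proof.
  intros H.
  assert (Hxy : x ⊔ y --> y = e) by now rewrite avee_imp, aimp_diag, ameet_e.
  now rewrite <- (reg_eq_of_aimp_e Hxy), e_imp_avee.
Qed.

(** * Designation and soundness *)

Lemma designatedE d : designated A d <-> d⁺ = d.
Proof.
  split.
  - intros [c ->]. now rewrite <- aplusE, aplus_idem.
  - intros H. exists d. now rewrite <- aplusE.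
Qed.

Lemma aminus_designated d : designated A d -> d⁻ = e.
Proof. intros H%designatedE. now rewrite <- H, aminus_aplus. Qed.

Lemma designated_reg_of_aminus x : x⁻ = e -> designated A (e --> x).
Proof.
  intros H. apply designatedE.
  now rewrite aplus_reg, reg_decomp, H, (ax1 A _ e), aneg_e, (ax9 A), e_imp_aplus.
Qed.

Lemma designated_e : designated A e.
Proof. apply designatedE, aplus_e. Qed.

Lemma designated_imp_one x : designated A (x --> one).
Proof.
  apply designatedE.
  now rewrite (aplusE (x --> one)), <- (aplusE x), aplus_imp_one.
Qed.

Lemma ameet_aminus x y : x = x ⊓ y -> x⁻ = x⁻ ⊓ y.
Proof.
  intros E. rewrite <- (ameet_e x). rewrite E at 1.
  now rewrite <- (ameetA x y e), (ameetC y e), ameetA.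
Qed.

Lemma designated_qmp x y :
  designated A (e --> x) -> designated A (e --> (x --> y)) -> designated A (e --> y).
Proof.
  intros Hx%designatedE Hxy. rewrite aplus_reg in Hx. rewrite (ax4 A) in Hxy.
  apply aminus_designated in Hxy. apply designated_reg_of_aminus.
  assert (E : x --> y = (x --> y) ⊓ (e --> y)).
  { rewrite <- (aimp_reg_l x y) at 1. now rewrite <- Hx, <- avee_e, avee_imp. }
  apply ameet_aminus in E. rewrite Hxy, ameetC, ameet_e, aminus_reg in E.
  now symmetry.
Qed.

Lemma designated_ameet_imp_avee x y z : designated A (x ⊓ y --> x ⊔ z).
Proof.
  apply designatedE.
  assert (E : x ⊓ y --> x ⊔ z = ((y --> x) ⊔ (x ⊓ y --> z))⁺).
  { rewrite (ax13 A), ameet_imp, aimp_diag, e_avee, <- (avee_e (y --> x)).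
    now rewrite <- (ax12 A), (ax11 A e), (ax12 A), avee_e. }
  now rewrite E, aplus_idem.
Qed.

Lemma designated_r2 p q r t :
  designated A (p --> q) -> designated A (r --> t) ->
  designated A ((q --> r) --> (p --> t)).
Proof.
  intros Hpq%aminus_designated%reg_eq_avee_of_aminus
         Hrt%aminus_designated%reg_eq_avee_of_aminus.
  assert (E1 : q --> r = (p --> r) ⊓ (q --> r)).
  { rewrite <- (aimp_reg_l q r) at 1. now rewrite Hpq, avee_imp. }
  assert (E2 : p --> t = (p --> r) ⊔ (p --> t)).
  { rewrite <- (aimp_reg_r t p) at 1. now rewrite Hrt, (ax13 A). }
  rewrite E1, E2. apply designated_ameet_imp_avee.
Qed.

Lemma designated_reg x : designated A x -> designated A (e --> x).
Proof.
  intros H%designatedE. apply designatedE.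
  now rewrite aplus_reg, <- H, e_imp_aplus, aplus_idem.
Qed.

Lemma designated_r3 x : designated A (e --> x) -> designated A x⁻.
Proof.
  intros H%aminus_designated. rewrite aminus_reg in H. rewrite H. apply designated_e.
Qed.

Lemma designated_flat x : designated A x -> designated A (¬ one) -> designated A (¬ x).
Proof.
  intros Hx%designatedE Hf%designatedE. rewrite aplusE, negone_imp_one in Hf.
  assert (Hone : one = e).
  { transitivity (¬ ¬ one); [now rewrite (ax9 A) | now rewrite <- Hf, aneg_e]. }
  apply designatedE.
  now rewrite <- aneg_aminus, aminusE, <- Hf, <- Hone, <- aplusE, Hx.
Qed.

Lemma eval_fvee V (v : V -> A) p q : eval A v (fvee p q) = eval A v p ⊔ eval A v q.
Proof. cbn [eval fvee fplus fminus]. now rewrite aveeE, !aplusE, !aminusE. Qed.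

Lemma aimp_e_of_eq x y : x = y -> x --> y = e.
Proof. intros ->. apply aimp_diag. Qed.

Lemma axiom_iff_aimp_e V (v : V -> A) p q : axiom_iff p q -> eval A v p --> eval A v q = e.
Proof.
  destruct 1; cbn [eval fplus fminus].
  - apply aimp_e_of_eq, ax1.
  - now apply aimp_e_of_eq; rewrite (ax3 A).
  - now rewrite (aimp_diag (eval A v q)), aimp_reg_r, aimp_diag.
  - now apply aimp_e_of_eq; rewrite (ax7 A (eval A v p)), !aplusE, !aminusE.
  - apply aimp_e_of_eq, ax8.
  - now apply aimp_e_of_eq; rewrite <- aplusE, (ax10 A), !aplusE.
  - now apply aimp_e_of_eq; rewrite !eval_fvee, (ax13 A), (ax11 A (_ --> _)).
  - apply aimp_e_of_eq. rewrite !eval_fvee. apply ax12.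
Qed.

Lemma designated_aimp_e x y : x --> y = e -> designated A (x --> y).
Proof. intros ->. apply designated_e. Qed.
End Algebra.

Theorem soundness V (q : form V) : provable q -> sqw_valid q.
Proof.
  intros Hq A v.
  induction Hq; cbn [eval fminus] in *; try rewrite (aimp_diag (eval A v r)) in *.
  - now apply designated_aimp_e, axiom_iff_aimp_e.
  - now apply designated_aimp_e, aimp_e_sym, axiom_iff_aimp_e.
  - apply designated_aimp_e, aimp_e_of_eq, ax2.
  - apply designated_imp_one.
  - now apply (designated_qmp IHHq1).
  - now apply designated_reg.
  - now rewrite (ax4 A) in IHHq.
  - now rewrite (ax8 A), (ax4 A), <- (ax8 A) in IHHq.
  - now rewrite e_imp_negone in IHHq.
  - now rewrite (ax3 A) in IHHq.
  - now rewrite (ax9 A).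
  - now rewrite (ax9 A) in IHHq.
  - now apply designated_flat.
  - now apply designated_r2.
  - rewrite <- aminusE. now apply designated_r3.
Qed.

(** * Derived rules of sqŁ* *)

Section Derivations.
Variable V : Type.
Local Notation pr := (@provable V).
Local Notation e := (Imp (@One V) One).

Lemma mp_imp X p q : pr X -> pr (Imp X (Imp p q)) -> pr (Imp p q).
Proof. intros HX HXpq. exact (AReg1 (qMP (Reg One HX) (Reg One HXpq))). Qed.

Lemma mp_reg X p : pr X -> pr (Imp X p) -> pr (Imp e p).
Proof. intros HX HXp. exact (qMP (Reg One HX) (Reg One HXp)). Qed.

Lemma provable_imp_refl p : pr (Imp p p).
Proof.
  set (X := Imp e p). set (Y := Imp e X).
  (* [Y -> Y] is the instance of Q9 whose two hypotheses are [1]. *)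
  assert (HY : pr (Imp Y Y)) by exact (Q9 One One p).
  assert (HX : pr (Imp X X)).
  { apply (mp_imp HY), R2'; [apply ax_iff_l | apply ax_iff_r]; apply Q3. }
  apply (mp_imp HX), R2'; [apply ax_iff_l | apply ax_iff_r]; apply Q3.
Qed.

Lemma provable_imp_trans p q r : pr (Imp p q) -> pr (Imp q r) -> pr (Imp p r).
Proof. intros Hpq Hqr. apply (mp_imp Hqr), R2'; [exact Hpq | apply provable_imp_refl]. Qed.

Definition interderivable (p q : form V) : Prop := pr (Imp p q) /\ pr (Imp q p).

Lemma interderivable_refl p : interderivable p p.
Proof. split; apply provable_imp_refl. Qed.

Lemma interderivable_sym p q : interderivable p q -> interderivable q p.
Proof. intros [H1 H2]; now split. Qed.

Lemma interderivable_trans p q r :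
  interderivable p q -> interderivable q r -> interderivable p r.
Proof. intros [H1 H2] [H3 H4]; split; eapply provable_imp_trans; eassumption. Qed.

Lemma interderivable_axiom p q : axiom_iff p q -> interderivable p q.
Proof. split; [apply ax_iff_l | apply ax_iff_r]; assumption. Qed.

Lemma interderivable_imp p p' q q' :
  interderivable p p' -> interderivable q q' -> interderivable (Imp p q) (Imp p' q').
Proof. intros [H1 H2] [H3 H4]; split; apply R2'; assumption. Qed.

Lemma interderivable_neg p q : interderivable p q -> interderivable (Neg p) (Neg q).
Proof.
  intros [H1 H2]; split.
  - apply (mp_imp H2), ax_iff_l, Q1.
  - apply (mp_imp H1), ax_iff_l, Q1.
Qed.

Lemma interderivable_fplus p q : interderivable p q -> interderivable (fplus p) (fplus q).
Proof. intros H. repeat apply interderivable_imp; auto using interderivable_refl. Qed.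

Lemma interderivable_fminus p q :
  interderivable p q -> interderivable (fminus p) (fminus q).
Proof. intros H. repeat apply interderivable_imp; auto using interderivable_refl. Qed.

Lemma interderivable_fvee p p' q q' :
  interderivable p p' -> interderivable q q' -> interderivable (fvee p q) (fvee p' q').
Proof.
  intros Hp Hq.
  repeat first [ assumption | apply interderivable_refl
               | apply interderivable_imp | apply interderivable_neg ].
Qed.

Lemma interderivable_reg p : interderivable p (Imp e p).
Proof. apply interderivable_axiom, Q3. Qed.

Lemma interderivable_neg_neg p : interderivable (Neg (Neg p)) p.
Proof.
  apply (interderivable_trans (q := Neg (Neg (Imp e p)))).
  { apply interderivable_neg, interderivable_neg, interderivable_reg. }
  apply (interderivable_trans (q := Neg (Imp p e))).
  { apply interderivable_neg, interderivable_axiom, Q5. }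
  apply (interderivable_trans (q := Imp e p)).
  - apply interderivable_axiom, Q5.
  - apply interderivable_sym, interderivable_reg.
Qed.

Lemma interderivable_fvee_comm p q : interderivable (fvee p q) (fvee q p).
Proof.
  apply (interderivable_trans (interderivable_reg _)).
  apply (interderivable_trans (interderivable_axiom (Q7 _ _ _))).
  apply interderivable_fvee; apply interderivable_sym, interderivable_reg.
Qed.
End Derivations.

(** * The Lindenbaum algebra *)

Section Lindenbaum.
Variable V : Type.
Local Notation e := (Imp (@One V) One).

(* A class is the predicate [interderivable p], so that equality of classes is
   interderivability, by functional and propositional extensionality. *)
Definition lclass : Type := {P : form V -> Prop | exists p, P = interderivable p}.

Definition lcls (p : form V) : lclass := exist _ (interderivable p) (ex_intro _ p eq_refl).

Lemma lcls_eq p q : lcls p = lcls q <-> interderivable p q.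
Proof.
  split.
  - intros H%(f_equal (@proj1_sig _ _)). cbn in H.
    rewrite H. apply interderivable_refl.
  - intros H.
    assert (E : interderivable p = interderivable q).
    { apply functional_extensionality. intros r. apply propositional_extensionality.
      split; apply interderivable_trans; [now apply interderivable_sym | exact H]. }
    apply eq_exist_uncurried. exists E. apply proof_irrelevance.
Qed.

Definition lrep (c : lclass) : form V :=
  proj1_sig (constructive_indefinite_description _ (proj2_sig c)).

Lemma lcls_lrep c : lcls (lrep c) = c.
Proof.
  unfold lrep. destruct (constructive_indefinite_description _ (proj2_sig c)) as [p Hp].
  destruct c as [P HP]. cbn in *. subst P. unfold lcls.
  f_equal. apply proof_irrelevance.
Qed.

Lemma lcls_surj c : exists p, c = lcls p.
Proof. exists (lrep c). symmetry. apply lcls_lrep. Qed.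

Lemma lrep_lcls p : interderivable (lrep (lcls p)) p.
Proof. apply lcls_eq, lcls_lrep. Qed.

Definition limp c d := lcls (Imp (lrep c) (lrep d)).
Definition lneg c := lcls (Neg (lrep c)).
Definition lplus c := lcls (fplus (lrep c)).
Definition lminus c := lcls (fminus (lrep c)).
Definition lone := lcls One.

Lemma limp_lcls p q : limp (lcls p) (lcls q) = lcls (Imp p q).
Proof. apply lcls_eq, interderivable_imp; apply lrep_lcls. Qed.

Lemma lneg_lcls p : lneg (lcls p) = lcls (Neg p).
Proof. apply lcls_eq, interderivable_neg, lrep_lcls. Qed.

Lemma lplus_lcls p : lplus (lcls p) = lcls (fplus p).
Proof. apply lcls_eq, interderivable_fplus, lrep_lcls. Qed.

Lemma lminus_lcls p : lminus (lcls p) = lcls (fminus p).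
Proof. apply lcls_eq, interderivable_fminus, lrep_lcls. Qed.

Definition lvee x y :=
  limp (limp (lplus (limp (lplus x) (lplus y))) (lminus (lneg x)))
       (limp (lminus (limp (lminus y) (lminus x))) (lminus x)).

Lemma lvee_lcls p q : lvee (lcls p) (lcls q) = lcls (fvee p q).
Proof.
  unfold lvee. now repeat rewrite ?lplus_lcls, ?lminus_lcls, ?lneg_lcls, ?limp_lcls.
Qed.

Ltac lind_reduce :=
  repeat match goal with c : lclass |- _ =>
    let p := fresh "p" in destruct (lcls_surj c) as [p ->] end;
  unfold lone;
  repeat rewrite ?lvee_lcls, ?limp_lcls, ?lneg_lcls, ?lplus_lcls, ?lminus_lcls;
  apply lcls_eq.

Lemma lind_ax1 x y : limp x y = limp (lneg y) (lneg x).
Proof. lind_reduce. apply interderivable_axiom, Q1. Qed.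

Lemma lind_ax2 x y z :
  limp (limp x lone) (limp (limp y lone) z) = limp (limp y lone) (limp (limp x lone) z).
Proof. lind_reduce. split; apply Q9. Qed.

Lemma lind_ax3 x : limp (limp lone x) lone = lone.
Proof. lind_reduce. apply interderivable_sym, interderivable_axiom, Q2. Qed.

Lemma lind_ax4 x y z : limp (limp z z) (limp x y) = limp x y.
Proof. lind_reduce. apply interderivable_sym, interderivable_axiom, Q3. Qed.

Lemma lind_ax5a x : limp (limp lone lone) (lplus x) = lplus (limp (limp lone lone) x).
Proof.
  lind_reduce. eapply interderivable_trans.
  - apply interderivable_sym, interderivable_reg.
  - apply interderivable_fplus, interderivable_reg.
Qed.

Lemma lind_ax5b x : lplus (limp (limp lone lone) x) = limp (limp x lone) lone.
Proof. lind_reduce. apply interderivable_fplus, interderivable_sym, interderivable_reg. Qed.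

Lemma lind_ax6a x : limp (limp lone lone) (lminus x) = lminus (limp (limp lone lone) x).
Proof.
  lind_reduce. eapply interderivable_trans.
  - apply interderivable_sym, interderivable_reg.
  - apply interderivable_fminus, interderivable_reg.
Qed.

Lemma lind_ax6b x :
  lminus (limp (limp lone lone) x) = limp (limp x (lneg lone)) (lneg lone).
Proof.
  lind_reduce. apply interderivable_fminus, interderivable_sym, interderivable_reg.
Qed.

Lemma lind_ax7 x y :
  limp x y = limp (limp (lplus y) (lminus x)) (limp (lplus x) (lminus y)).
Proof. lind_reduce. apply interderivable_axiom, Q4. Qed.

Lemma lind_ax8 x y : lneg (limp x y) = limp y x.
Proof. lind_reduce. apply interderivable_axiom, Q5. Qed.

Lemma lind_ax9 x : lneg (lneg x) = x.
Proof. lind_reduce. apply interderivable_neg_neg. Qed.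

Lemma lind_ax10 x y :
  lplus (limp x (limp (lneg x) y)) = limp (lplus x) (limp (lneg (lplus x)) (lplus y)).
Proof. lind_reduce. apply interderivable_axiom, Q6. Qed.

Lemma lind_ax11 x y : lvee x y = lvee y x.
Proof. lind_reduce. apply interderivable_fvee_comm. Qed.

Lemma lind_ax12 x y z : lvee x (lvee y z) = lvee (lvee x y) z.
Proof. lind_reduce. apply interderivable_axiom, Q8. Qed.

Lemma lind_ax13 x y z : limp x (lvee y z) = lvee (limp x y) (limp x z).
Proof.
  lind_reduce. eapply interderivable_trans.
  - apply interderivable_axiom, Q7.
  - apply interderivable_fvee_comm.
Qed.

Lemma lind_axS1 x : lplus x = limp (limp lone lone) (lplus x).
Proof. lind_reduce. apply interderivable_reg. Qed.

Lemma lind_axS2 x : lminus x = limp (limp lone lone) (lminus x).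
Proof. lind_reduce. apply interderivable_reg. Qed.

Definition lind_alg : SQWalg :=
  @Build_SQWalg lclass limp lneg lplus lminus lone lind_ax1 lind_ax2 lind_ax3 lind_ax4
    lind_ax5a lind_ax5b lind_ax6a lind_ax6b lind_ax7 lind_ax8 lind_ax9 lind_ax10
    lind_ax11 lind_ax12 lind_ax13 lind_axS1 lind_axS2.

Lemma eval_lind_alg q : eval lind_alg (fun x => lcls (Var x)) q = lcls q.
Proof.
  induction q as [x| |p IHp q IHq|p IHp]; cbn [eval].
  - reflexivity.
  - reflexivity.
  - rewrite IHp, IHq. apply limp_lcls.
  - rewrite IHp. apply lneg_lcls.
Qed.

Lemma provable_reg_of_valid q : sqw_valid q -> provable (Imp e q).
Proof.
  intros H. specialize (H lind_alg (fun x => lcls (Var x))).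
  rewrite eval_lind_alg in H. destruct H as [c Hc]. destruct (lcls_surj c) as [p ->].
  cbn in Hc. unfold lone in Hc. rewrite !limp_lcls in Hc.
  apply lcls_eq in Hc as [_ Hpq]. exact (mp_reg (Q10 (Imp p One)) Hpq).
Qed.
End Lindenbaum.

(** * Completeness *)

Inductive three : Type := t_one | t_negone | t_e.

Definition three_imp (x y : three) : three :=
  match x, y with
  | t_one, t_one | t_negone, t_negone | t_e, t_e => t_e
  | _, t_one => t_one
  | _, t_negone => t_negone
  | t_one, t_e => t_negone
  | t_negone, t_e => t_one
  end.

Definition three_neg (x : three) : three :=
  match x with t_one => t_negone | t_negone => t_one | t_e => t_e end.

Definition three_alg : SQWalg.
Proof.
  refine (@Build_SQWalg three three_imp three_neg
            (fun x => three_imp (three_imp x t_one) t_one)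
            (fun x => three_imp (three_imp x t_negone) t_negone)
            t_one _ _ _ _ _ _ _ _ _ _ _ _ _ _ _ _ _);
    intros; repeat match goal with x : three |- _ => destruct x; clear x end;
    reflexivity.
Defined.

Lemma three_negone_not_designated : ~ designated three_alg t_negone.
Proof. intros [[] H]; discriminate. Qed.

Lemma valid_of_valid_neg_neg V (q : form V) : sqw_valid (Neg (Neg q)) -> sqw_valid q.
Proof. intros H A v. specialize (H A v). cbn in H. now rewrite ax9 in H. Qed.

Lemma completeness V (q : form V) :
  (sqw_valid q -> provable q) /\ (sqw_valid (Neg q) -> provable (Neg q)).
Proof.
  induction q as [x| |p IHp q IHq|p IHp]; split; intros H.
  - destruct (three_negone_not_designated (H three_alg (fun _ => t_negone))).
  - destruct (three_negone_not_designated (H three_alg (fun _ => t_one))).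
  - exact (AReg4 (Q10 (Imp One One))).
  - exact (AReg3 (provable_reg_of_valid H)).
  - exact (AReg1 (provable_reg_of_valid H)).
  - exact (AReg2 (provable_reg_of_valid H)).
  - now apply IHp.
  - now apply Inv1, IHp, valid_of_valid_neg_neg.
Qed.

Theorem theorem4p1 (V : Type) (q : form V) :
  sqw_valid q <-> provable q.
Proof.
  split.
  - apply completeness.
  - apply soundness.
Qed.
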